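(* Let $d\ge2$, $f:\mathbb Z^d\to\mathbb R$, and let $\varphi:G\to\mathbb R$ be a bounded $f$-flow on the Cayley graph $G$ of $\mathbb Z^d$. Let $$C=\{n_1,\dots,n_1+k_1\}\times\dots\times\{n_{d-1},\dots,n_{d-1}+k_{d-1}\}\times\{n_d,n_d+1\}$$ for some integers $n_1,\dots,n_d,k_1,\dots,k_{d-1}$ with $k_1,\dots,k_{d-1}\ge0$. Then for every $1\le\ell<d$ there is an $f$-flow $\psi$ such that: (i) $\mathrm{supp}(\varphi-\psi)\subseteq\mathrm{edges}(C)$; (ii) for every $x=(x_1,\dots,x_{d-1},n_d)\in C$ with $n_\ell\le x_\ell<n_\ell+k_\ell$ we have $\psi(x,x+e_d)\in\mathbb Z$; (iii) $|\varphi-\psi|<2$ on every edge.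
   Context: $G=\{(x,x')\in\mathbb Z^d\times\mathbb Z^d: x'-x\in\{\pm e_1,\dots,\pm e_d\}\}$ is the Cayley graph of $\mathbb Z^d$; an edge $(x,x')$ is positively oriented if $x'-x=e_j$ for some $j$. For $A\subseteq\mathbb Z^d$, $\mathrm{edges}(A)=\{(x,x+e_j):1\le j\le d,\ \{x,x+e_j\}\subseteq A\}$. An $f$-flow is $\varphi:G\to\mathbb R$ with $\varphi(x,y)=-\varphi(y,x)$ and $f(x)=\sum_{(x,y)\in G}\varphi(x,y)$ for all $x$. For a flow difference $\eta=\varphi-\psi$ (antisymmetric), ''$\mathrm{supp}(\eta)\subseteq \mathcal E$'' for a set $\mathcal E$ of positively oriented edges means $\eta(x,y)=0$ unless $(x,y)\in\mathcal E$ or $(y,x)\in\mathcal E$. *)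

From Stdlib Require Import Reals ZArith List.
From mathcomp Require Import ssreflect ssrfun ssrbool eqtype ssrnat seq choice fintype.

Set Implicit Arguments.
Unset Strict Implicit.
Unset Printing Implicit Defensive.

(* A point of Z^d: coordinates indexed by 'I_d (coordinate j+1 of the paper
   is index j here). *)
Definition pt (d : nat) := 'I_d -> Z.

Definition shiftp (d : nat) (x : pt d) (j : 'I_d) (s : Z) : pt d :=
  fun i => if i == j then (x i + s)%Z else x i.

Definition Gedge (d : nat) (x y : pt d) : Prop :=
  exists j : 'I_d, y = shiftp x j 1%Z \/ y = shiftp x j (-1)%Z.

Definition edges_of (d : nat) (A : pt d -> Prop) (x y : pt d) : Prop :=
  exists j : 'I_d, y = shiftp x j 1%Z /\ A x /\ A y.

Definition out_sum (d : nat) (phi : pt d -> pt d -> R) (x : pt d) : R :=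
  fold_right Rplus 0%R
    (map (fun j : 'I_d => (phi x (shiftp x j 1%Z) + phi x (shiftp x j (-1)%Z))%R)
         (enum 'I_d)).

Definition is_flow (d : nat) (f : pt d -> R) (phi : pt d -> pt d -> R) : Prop :=
  (forall x y, Gedge x y -> phi x y = (- phi y x)%R) /\
  (forall x, f x = out_sum phi x).

Definition bounded_on_G (d : nat) (phi : pt d -> pt d -> R) : Prop :=
  exists M : R, forall x y, Gedge x y -> (Rabs (phi x y) <= M)%R.

Definition supp_in (d : nat) (eta : pt d -> pt d -> R)
  (E : pt d -> pt d -> Prop) : Prop :=
  forall x y, Gedge x y -> eta x y <> 0%R -> E x y \/ E y x.

Definition box (d : nat) (n k : 'I_d -> Z) (x : pt d) : Prop :=
  forall j : 'I_d,
    (n j <= x j <= n j + (if (val j < d.-1)%nat then k j else 1%Z))%Z.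

From Stdlib Require Import Reals ZArith List.
From mathcomp Require Import ssreflect ssrfun ssrbool eqtype ssrnat seq choice fintype.
From Stdlib Require Import Lra Lia ClassicalEpsilon FunctionalExtensionality.

Set Implicit Arguments.
Unset Strict Implicit.
Unset Printing Implicit Defensive.

Local Open Scope R_scope.

(* The new flow is psi = phi + eta, where eta is a superposition
   of "plaquette circulations" in the plane spanned by the directions l and
   d (index dl): a real weight a(p) placed on the unit square with lower
   corner p pushes a(p) units of flow around its boundary.  Such an eta has
   zero divergence, so psi is again an f-flow; if 0 <= a <= 1 then eta takes
   values in [-1,1] on every edge; and eta vanishes off the squares carrying
   a nonzero weight.  On the vertical edge (x, x+e_d) eta equals
   a(x) - a(x-e_l), so walking along each line in direction l one chooses
   the weights a(x) in (0,1] successively, each one rounding up the current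
   flux to the next integer (a "carry").  Weights are put only on squares
   inside the box C, which gives the support condition. *)

Definition ind (P : Prop) (r : R) : R :=
  if excluded_middle_informative P then r else 0.

Lemma ind_T (P : Prop) (r : R) : P -> ind P r = r.
Proof. by rewrite /ind; case: (excluded_middle_informative P). Qed.

Lemma ind_F (P : Prop) (r : R) : ~ P -> ind P r = 0.
Proof. by rewrite /ind; case: (excluded_middle_informative P). Qed.

Definition is_int (r : R) : Prop := exists z : Z, r = IZR z.

Section Shifts.
Variable d : nat.
Implicit Types (x : pt d) (i j : 'I_d).

Lemma shiftp_at x j s : shiftp x j s j = (x j + s)%Z.
Proof. by rewrite /shiftp eqxx. Qed.

Lemma shiftp_off x i j s : i != j -> shiftp x j s i = x i.
Proof. by rewrite /shiftp => /negbTE ->. Qed.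

Lemma shiftpK x j : shiftp (shiftp x j (-1)) j 1 = x.
Proof.
apply: functional_extensionality => i; rewrite /shiftp.
by case: (i == j); lia.
Qed.

Lemma shiftpC x i j s t : shiftp (shiftp x i s) j t = shiftp (shiftp x j t) i s.
Proof.
apply: functional_extensionality => i'; rewrite /shiftp.
by case: (i' == i); case: (i' == j); lia.
Qed.

End Shifts.

Section CoordSums.
Variable d : nat.
Implicit Types (F G : 'I_d -> R).

Definition coord_sum F : R := fold_right Rplus 0 (map F (enum 'I_d)).

Lemma coord_sum_add F G : coord_sum (fun j => F j + G j) = coord_sum F + coord_sum G.
Proof. by rewrite /coord_sum; elim: (enum 'I_d) => [|j s IH] /=; [lra | rewrite IH; lra]. Qed.

Lemma coord_sum_opp F : coord_sum (fun j => - F j) = - coord_sum F.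
Proof. by rewrite /coord_sum; elim: (enum 'I_d) => [|j s IH] /=; [lra | rewrite IH; lra]. Qed.

Lemma fold_sum_single F j0 (s : seq 'I_d) :
  (forall j, j != j0 -> F j = 0) -> uniq s ->
  fold_right Rplus 0 (map F s) = if j0 \in s then F j0 else 0.
Proof.
move=> hF; elim: s => [|j s IH] //= /andP [hj hu]; rewrite in_cons IH //.
case: (eqVneq j0 j) => [->|hne] /=; first by rewrite (negbTE hj); lra.
by rewrite hF 1?eq_sym //; lra.
Qed.

Lemma coord_sum_single F j0 : (forall j, j != j0 -> F j = 0) -> coord_sum F = F j0.
Proof. by move=> hF; rewrite /coord_sum (fold_sum_single hF (enum_uniq _)) mem_enum. Qed.

Lemma coord_sum_pair F l m : l != m ->
  (forall j, j != l -> j != m -> F j = 0) -> coord_sum F = F l + F m.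
Proof.
move=> hlm hF.
have -> : coord_sum F =
    coord_sum (fun j => (if j == l then F j else 0) + (if j == l then 0 else F j)).
  by congr coord_sum; apply: functional_extensionality => j; case: (j == l); lra.
rewrite coord_sum_add (coord_sum_single (j0 := l)); last by move=> j /negbTE ->.
rewrite (coord_sum_single (j0 := m)); last first.
  by move=> j hjm; case: eqVneq => [//|hjl]; apply: hF.
by rewrite eqxx eq_sym (negbTE hlm); lra.
Qed.

End CoordSums.

Lemma out_sum_coord d (phi : pt d -> pt d -> R) x :
  out_sum phi x = coord_sum (fun j => phi x (shiftp x j 1%Z) + phi x (shiftp x j (-1)%Z)).
Proof. by []. Qed.

Lemma out_sum_add d (p q : pt d -> pt d -> R) x :
  out_sum (fun x y => p x y + q x y) x = out_sum p x + out_sum q x.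
Proof.
rewrite !out_sum_coord -coord_sum_add; congr coord_sum.
by apply: functional_extensionality => j; lra.
Qed.

Lemma flow_add_divfree d (f : pt d -> R) (phi eta : pt d -> pt d -> R) :
  is_flow f phi -> (forall x y, eta x y = - eta y x) -> (forall x, out_sum eta x = 0) ->
  is_flow f (fun x y => phi x y + eta x y).
Proof.
move=> [hanti hdiv] heta hdiv0; split=> [x y hG | x].
- by rewrite hanti // heta; lra.
- by rewrite out_sum_add -hdiv hdiv0; lra.
Qed.

(* A flow prescribed by its values [g j x] on the positively oriented edges
   (x, x+e_j), extended antisymmetrically to all of G. *)
Section EdgeFlows.
Variable d : nat.
Variable g : 'I_d -> pt d -> R.
Implicit Types (x y : pt d) (j : 'I_d).

Definition edge_flow x y : R :=
  coord_sum (fun j => ind (y = shiftp x j 1%Z) (g j x) - ind (x = shiftp y j 1%Z) (g j y)).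

Lemma edge_flow_anti x y : edge_flow x y = - edge_flow y x.
Proof.
by rewrite /edge_flow -coord_sum_opp; congr coord_sum;
  apply: functional_extensionality => j; lra.
Qed.

Lemma edge_flow_up x j : edge_flow x (shiftp x j 1%Z) = g j x.
Proof.
rewrite /edge_flow (coord_sum_single (j0 := j)).
- rewrite ind_T // ind_F; first lra.
  by move/(f_equal (fun p => p j)); rewrite !shiftp_at; lia.
- move=> j' hj'; have hjj' : j != j' by rewrite eq_sym.
  rewrite !ind_F; first lra.
  + by move/(f_equal (fun p => p j)); rewrite shiftp_off // shiftp_at; lia.
  + by move/(f_equal (fun p => p j)); rewrite shiftp_at shiftp_off //; lia.
Qed.

Lemma edge_flow_down x j : edge_flow x (shiftp x j (-1)%Z) = - g j (shiftp x j (-1)%Z).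
Proof.
rewrite /edge_flow (coord_sum_single (j0 := j)).
- rewrite ind_F ?ind_T ?shiftpK //; first lra.
  by move/(f_equal (fun p => p j)); rewrite !shiftp_at; lia.
- move=> j' hj'; have hjj' : j != j' by rewrite eq_sym.
  rewrite !ind_F; first lra.
  + by move/(f_equal (fun p => p j)); rewrite shiftp_off // !shiftp_at; lia.
  + by move/(f_equal (fun p => p j)); rewrite shiftp_at shiftp_off //; lia.
Qed.

Lemma edge_flow_div x :
  out_sum edge_flow x = coord_sum (fun j => g j x - g j (shiftp x j (-1)%Z)).
Proof.
rewrite out_sum_coord; congr coord_sum; apply: functional_extensionality => j.
by rewrite edge_flow_up edge_flow_down; lra.
Qed.

Lemma edge_flow_bound (M : R) : (forall j x, Rabs (g j x) <= M) ->
  forall x y, Gedge x y -> Rabs (edge_flow x y) <= M.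
Proof.
move=> hM x y [j [->|->]]; first by rewrite edge_flow_up.
by rewrite edge_flow_down Rabs_Ropp.
Qed.

Lemma edge_flow_support x y : Gedge x y -> edge_flow x y <> 0 ->
  exists j, (y = shiftp x j 1%Z /\ g j x <> 0) \/ (x = shiftp y j 1%Z /\ g j y <> 0).
Proof.
move=> [j [->|->]] hnz; exists j.
- by left; rewrite -edge_flow_up.
- right; rewrite shiftpK; split=> // hg; apply: hnz.
  by rewrite edge_flow_down hg; lra.
Qed.

End EdgeFlows.

(* Plaquette circulations in the plane of two distinct directions l and m:
   the weight [a p] circulates around the unit square with lower corner p,
   i.e. along p -> p+e_m -> p+e_l+e_m -> p+e_l -> p. *)
Section Plaquettes.
Variable d : nat.
Variables l m : 'I_d.
Hypothesis hlm : l != m.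
Variable a : pt d -> R.
Implicit Types (p q x : pt d) (j : 'I_d).

Definition plaq j x : R :=
  if j == m then a x - a (shiftp x l (-1)%Z)
  else if j == l then a (shiftp x m (-1)%Z) - a x
  else 0.

(* The net outflow at x of the four circulations around x cancels. *)
Lemma plaq_divergence_free x : out_sum (edge_flow plaq) x = 0.
Proof.
rewrite edge_flow_div (coord_sum_pair hlm); last first.
  by move=> j /negbTE hjl /negbTE hjm; rewrite /plaq hjl hjm; lra.
rewrite /plaq eqxx (negbTE hlm) eqxx (shiftpC _ l m); lra.
Qed.

Lemma plaq_bound : (forall p, 0 <= a p <= 1) -> forall j x, Rabs (plaq j x) <= 1.
Proof.
move=> ha j x; rewrite /plaq.
have := ha x; have := ha (shiftp x l (-1)%Z); have := ha (shiftp x m (-1)%Z).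
by case: (j == m); [|case: (j == l)]; move=> *; apply: Rabs_le; lra.
Qed.

Definition square p q : Prop :=
  forall i, if (i == l) || (i == m) then (p i <= q i <= p i + 1)%Z else q i = p i.

Let lm_false : (l == m) = false. Proof. exact: negbTE hlm. Qed.
Let ml_false : (m == l) = false. Proof. by rewrite eq_sym. Qed.

Ltac square_tac :=
  let i := fresh "i" in move=> i; rewrite /shiftp;
  case: (eqVneq i l) => [->|_]; [by rewrite ?eqxx ?lm_false /=; lia |];
  case: (eqVneq i m) => [->|_]; by rewrite ?eqxx ?ml_false /=; lia.

Lemma plaq_support j x : plaq j x <> 0 ->
  exists p, a p <> 0 /\ square p x /\ square p (shiftp x j 1%Z).
Proof.
rewrite /plaq; case: (eqVneq j m) => [->|hjm].
  have [hax|hax] := Req_dec (a x) 0 => hnz.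
  - exists (shiftp x l (-1)%Z); split; [lra | split; square_tac].
  - by exists x; split=> //; split; square_tac.
case: (eqVneq j l) => [->|hjl] hnz; last by [].
have [hax|hax] := Req_dec (a x) 0.
- exists (shiftp x m (-1)%Z); split; [lra | split; square_tac].
- by exists x; split=> //; split; square_tac.
Qed.

End Plaquettes.

Definition up_gap (r : R) : R := IZR (up r) - r.

Lemma up_gap_bounds r : 0 < up_gap r <= 1.
Proof. by rewrite /up_gap; have [h1 h2] := archimed r; lra. Qed.

Lemma up_gap_int r : is_int (r + up_gap r).
Proof. by exists (up r); rewrite /up_gap; ring. Qed.

Fixpoint carry (v : nat -> R) (t : nat) : R :=
  match t with
  | O => up_gap (v O)
  | S t' => up_gap (v (S t') - carry v t')
  end.

Definition carry_prev (v : nat -> R) (t : nat) : R :=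
  match t with O => 0 | S t' => carry v t' end.

Lemma carry_bounds v t : 0 < carry v t <= 1.
Proof. by case: t => [|t] /=; apply: up_gap_bounds. Qed.

Lemma carry_int v t : is_int (v t - carry_prev v t + carry v t).
Proof. by case: t => [|t] /=; rewrite ?Rminus_0_r; apply: up_gap_int. Qed.

(* The weights for the box C: the plaquette plane is spanned by l and the
   last direction dl; weights live on the squares inside C, i.e. on the
   corners p in the bottom layer of C with p_l < n_l + k_l. *)
Section BoxWeights.
Variable d : nat.
Variables (n k : 'I_d -> Z) (dl l : 'I_d).
Hypothesis hdl : val dl = d.-1.
Hypothesis hl : (val l < d.-1)%N.
Variable phi : pt d -> pt d -> R.
Implicit Types (p q x y : pt d).

Lemma l_neq_dl : l != dl.
Proof. by apply/eqP => e; move: hl; rewrite e hdl ltnn. Qed.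

Definition corner p : Prop := box n k p /\ p dl = n dl /\ (p l < n l + k l)%Z.

Lemma corner_square_box p q : corner p -> square l dl p q -> box n k q.
Proof.
move=> [hb [hpd hpl]] hsq i; have := hsq i; have := hb i.
case: (eqVneq i l) => [->|_]; first by rewrite hl /=; lia.
case: (eqVneq i dl) => [->|_]; first by rewrite orbT hdl ltnn /=; lia.
by move=> ? /= ->.
Qed.

Definition on_line p (z : Z) : pt d := fun i => if i == l then z else p i.

Lemma on_line_self p : on_line p (p l) = p.
Proof. by apply: functional_extensionality => i; rewrite /on_line; case: eqVneq => [->|]. Qed.

Lemma on_line_shift p s z : on_line (shiftp p l s) z = on_line p z.
Proof.
by apply: functional_extensionality => i; rewrite /on_line /shiftp; case: (i == l).
Qed.

Definition line_flux p (t : nat) : R :=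
  phi (on_line p (n l + Z.of_nat t)) (shiftp (on_line p (n l + Z.of_nat t)) dl 1%Z).

Definition weight p : R :=
  ind (corner p) (carry (line_flux p) (Z.to_nat (p l - n l))).

Lemma weight_bounds p : 0 <= weight p <= 1.
Proof.
rewrite /weight /ind; case: (excluded_middle_informative (corner p)) => ? /=; last lra.
by have := carry_bounds (line_flux p) (Z.to_nat (p l - n l)); lra.
Qed.

Lemma weight_corner p : weight p <> 0 -> corner p.
Proof. by rewrite /weight /ind; case: (excluded_middle_informative (corner p)). Qed.

Lemma weight_prev x : corner x ->
  weight (shiftp x l (-1)%Z) = carry_prev (line_flux x) (Z.to_nat (x l - n l)).
Proof.
move=> [hb [hxd hxl]]; have := hb l; rewrite hl => hxl0.
have hdl_l : dl != l by rewrite eq_sym l_neq_dl.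
case ht: (Z.to_nat (x l - n l)) => [|t] /=.
  by apply: ind_F => -[hb' _]; have := hb' l; rewrite shiftp_at hl; lia.
have cx' : corner (shiftp x l (-1)%Z).
  split; last by rewrite shiftp_off // shiftp_at; lia.
  move=> i; have := hb i; case: (eqVneq i l) => [->|hil]; last by rewrite shiftp_off.
  by rewrite shiftp_at hl; lia.
rewrite /weight ind_T // shiftp_at.
have -> : line_flux (shiftp x l (-1)%Z) = line_flux x.
  by apply: functional_extensionality => s; rewrite /line_flux on_line_shift.
by congr carry; lia.
Qed.

Lemma weight_int x : corner x ->
  is_int (phi x (shiftp x dl 1%Z) + (weight x - weight (shiftp x l (-1)%Z))).
Proof.
move=> cx; rewrite weight_prev // {1}/weight ind_T //.
have [hb [_ hxl]] := cx; have := hb l; rewrite hl => hxl0.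
have [z hz] := carry_int (line_flux x) (Z.to_nat (x l - n l)).
exists z; rewrite -hz /line_flux.
have -> : (n l + Z.of_nat (Z.to_nat (x l - n l)))%Z = x l by lia.
by rewrite on_line_self; lra.
Qed.

Definition correction : pt d -> pt d -> R := edge_flow (plaq l dl weight).

Lemma correction_vertical x :
  correction x (shiftp x dl 1%Z) = weight x - weight (shiftp x l (-1)%Z).
Proof. by rewrite /correction edge_flow_up /plaq eqxx. Qed.

Lemma correction_support x y : Gedge x y -> correction x y <> 0 ->
  edges_of (box n k) x y \/ edges_of (box n k) y x.
Proof.
move=> hG hnz; have [j [[-> hg]|[-> hg]]] := edge_flow_support hG hnz;
  have [p [hap [hx hy]]] := plaq_support l_neq_dl hg;
  have cp := weight_corner hap; [left | right]; exists j;
  by split=> //; split; apply: corner_square_box cp _.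
Qed.

End BoxWeights.

Theorem mainTheorem5 (d : nat) (hd : (2 <= d)%N)
  (f : pt d -> R) (phi : pt d -> pt d -> R)
  (hphi : is_flow f phi) (hbd : bounded_on_G phi)
  (n k : 'I_d -> Z) (hk : forall j : 'I_d, (val j < d.-1)%N -> (0 <= k j)%Z)
  (dl : 'I_d) (hdl : val dl = d.-1)
  (l : 'I_d) (hl : (val l < d.-1)%N) :
  exists psi : pt d -> pt d -> R,
    is_flow f psi /\
    supp_in (fun x y => (phi x y - psi x y)%R) (edges_of (box n k)) /\
    (forall x : pt d, box n k x -> x dl = n dl ->
       (n l <= x l < n l + k l)%Z ->
       exists z : Z, psi x (shiftp x dl 1%Z) = IZR z) /\
    (forall x y, Gedge x y -> (Rabs (phi x y - psi x y) < 2)%R).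
Proof.
pose eta := correction n k dl l phi.
have diff_eta x y : phi x y - (phi x y + eta x y) = - eta x y by ring.
exists (fun x y => phi x y + eta x y); split; [|split; [|split]].
- apply: flow_add_divfree => // [x y | x]; first exact: edge_flow_anti.
  exact: plaq_divergence_free (l_neq_dl hdl hl) (weight n k dl l phi) x.
- move=> x y hG; rewrite diff_eta => hnz.
  by apply: (correction_support hdl hl (phi := phi) hG) => heta; apply: hnz; rewrite /eta heta; lra.
- move=> x hb hxd [_ hxl]; rewrite /eta correction_vertical.
  exact: (weight_int hdl hl phi (conj hb (conj hxd hxl))).
- move=> x y hG; rewrite diff_eta Rabs_Ropp /eta /correction.
  have := edge_flow_bound (plaq_bound l dl (weight_bounds n k dl l phi)) hG; lra.
Qed.
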